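(* Let $K\subseteq\mathbb{R}^{n}$ be compact, $T\subseteq\mathbb{R}^{n}$ compact with non-empty interior, $\delta>0$, and let $\Lambda(\delta)\subseteq\mathbb{R}^{n}$ be a finite $\delta$-net for $K+T$. Then \[ M_{\omega}(K,T)\ge M_{\omega}(K,T+\delta B_{2}^{n},\Lambda(\delta)). \]
   Context: $B_2^n$ is the closed Euclidean unit ball; a set $\Lambda$ is a $\delta$-net for $A$ if $A\subseteq\Lambda+\delta B_2^n$. $\mathbbm{1}_A$ is the indicator of $A$. $M_\omega(K,T)$ is the supremum of $\sum_i\omega_i$ over finite families $\{(x_i,\omega_i)\}$ with $x_i\in K$, $\omega_i\ge0$, such that $\sum_i\omega_i\mathbbm{1}_T(x-x_i)\le1$ for all $x\in\mathbb{R}^n$. For a finite set $\Lambda\subseteq\mathbb{R}^n$ and a set $S$, $M_\omega(K,S,\Lambda)$ is the supremum of $\sum_i\omega_i$ over finite families $\{(x_i,\omega_i)\}$ with $x_i\in\Lambda\cap K$, $\omega_i\ge0$, such that $\sum_i\omega_i\mathbbm{1}_S(x-x_i)\le1$ for all $x\in\Lambda$. *)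

From HB Require Import structures.
From mathcomp Require Import all_boot all_order all_algebra.
From mathcomp Require Import all_classical all_reals all_analysis.
Set Implicit Arguments. Unset Strict Implicit. Unset Printing Implicit Defensive.
Import Order.TTheory GRing.Theory Num.Theory.
Import numFieldNormedType.Exports.
Local Open Scope classical_set_scope.
Local Open Scope ring_scope.

Section Defs.
Variables (R : realType) (n : nat).
Local Notation V := 'rV[R]_n.

Definition eucl_norm (x : V) : R := Num.sqrt (\sum_(i < n) x ord0 i ^+ 2).

Definition ball2 : set V := [set x | eucl_norm x <= 1].

Definition mink_sum (A B : set V) : set V := [set a + b | a in A & b in B].
Definition dilate (r : R) (A : set V) : set V := [set r *: a | a in A].

Definition is_delta_net (Lam : set V) (d : R) (A : set V) : Prop :=
  A `<=` mink_sum Lam (dilate d ball2).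

Definition M_omega (K T : set V) : \bar R :=
  ereal_sup [set r : \bar R | exists (m : nat) (x : 'I_m -> V) (w : 'I_m -> R),
     [/\ forall i, K (x i), forall i, 0 <= w i,
         forall y : V, \sum_(i < m) w i * \1_T (y - x i) <= 1
       & r = (\sum_(i < m) w i)%:E]].

Definition M_omega_net (K S Lam : set V) : \bar R :=
  ereal_sup [set r : \bar R | exists (m : nat) (x : 'I_m -> V) (w : 'I_m -> R),
     [/\ forall i, (Lam `&` K) (x i), forall i, 0 <= w i,
         forall y : V, Lam y -> \sum_(i < m) w i * \1_S (y - x i) <= 1
       & r = (\sum_(i < m) w i)%:E]].

End Defs.

Arguments ball2 {R n}.

From HB Require Import structures.
From mathcomp Require Import all_boot all_order all_algebra.
From mathcomp Require Import all_classical all_reals all_analysis.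
Import Order.TTheory GRing.Theory Num.Theory.
Import numFieldNormedType.Exports.
Local Open Scope classical_set_scope.
Local Open Scope ring_scope.

(* Every family admissible for the net problem is admissible for M_omega(K,T)
   with the same total weight.  Indeed, if y - x_j lies in T for some j, then y
   lies in K + T, so y = l + d b with l in the net and b in the ball; then for
   every i, y - x_i in T forces l - x_i = (y - x_i) + d (-b) in T + d B, so the
   overlap of the T-translates at y is at most that of the enlarged translates
   at the net point l. *)

Section NetOverlap.
Set Implicit Arguments.
Unset Strict Implicit.
Variables (R : realType) (n : nat).
Local Notation V := 'rV[R]_n.

Definition overlap (S : set V) (m : nat) (x : 'I_m -> V) (w : 'I_m -> R)
    (y : V) : R :=
  \sum_(i < m) w i * \1_S (y - x i).

Lemma eucl_normN (x : V) : eucl_norm (- x) = eucl_norm x.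
Proof. by rewrite /eucl_norm; under eq_bigr do rewrite mxE sqrrN. Qed.

Lemma dilate_ball2N (d : R) (b : V) :
  dilate d ball2 b -> dilate d ball2 (- b).
Proof.
case=> a a_ball <-; exists (- a); last by rewrite scalerN.
by rewrite /ball2 /= eucl_normN.
Qed.

Lemma mink_sum_subr (A B : set V) (a b : V) :
  A a -> B (- b) -> mink_sum A B (a - b).
Proof. by move=> Aa Bb; exists a => //; exists (- b). Qed.

Lemma indic_le_indic (A B : set V) (u v : V) :
  (A u -> B v) -> \1_A u <= \1_B v :> R.
Proof.
rewrite !indicE; case: (boolP (u \in A)) => [/set_mem Au|_] AB.
  by rewrite (mem_set (AB Au)).
by case: (_ \in _).
Qed.

Lemma overlap_le (S S' : set V) m (x : 'I_m -> V) w y y' :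
  (forall i, 0 <= w i) -> (forall i, S (y - x i) -> S' (y' - x i)) ->
  overlap S x w y <= overlap S' x w y'.
Proof.
move=> w_ge0 SS'; apply: ler_sum => i _.
exact/(ler_wpM2l (w_ge0 i))/indic_le_indic/SS'.
Qed.

Lemma overlap_eq0 (S : set V) m (x : 'I_m -> V) w y :
  (forall i, ~ S (y - x i)) -> overlap S x w y = 0.
Proof.
by move=> notS; rewrite /overlap big1 // => i _; rewrite indicE memNset ?mulr0.
Qed.

Variables (K T Lam : set V) (d : R).
Hypothesis net : is_delta_net Lam d (mink_sum K T).

Lemma net_point_enlarged_translates (k y : V) : K k -> T (y - k) ->
  exists2 l, Lam l &
    forall t, T (y - t) -> mink_sum T (dilate d ball2) (l - t).
Proof.
move=> Kk Tyk.
have /net [l Laml [e de <-]] : mink_sum K T y.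
  by exists k => //; exists (y - k); rewrite // addrC subrK.
exists l => // t Tt.
have -> : l - t = (l + e - t) - e by rewrite addrAC addrK.
exact/mink_sum_subr/dilate_ball2N.
Qed.

Lemma overlap_le1_of_net m (x : 'I_m -> V) w :
  (forall i, K (x i)) -> (forall i, 0 <= w i) ->
  (forall l, Lam l -> overlap (mink_sum T (dilate d ball2)) x w l <= 1) ->
  forall y, overlap T x w y <= 1.
Proof.
move=> Kx w_ge0 net_le1 y.
have [[j Tyj]|noT] := pselect (exists j, T (y - x j)); last first.
  by rewrite overlap_eq0 // => i Tyi; apply: noT; exists i.
have [l Laml enlarged] := net_point_enlarged_translates (Kx j) Tyj.
apply: le_trans (net_le1 l Laml).
exact: overlap_le w_ge0 (fun i => enlarged (x i)).
Qed.

End NetOverlap.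

Theorem lemma2p3 (R : realType) (n : nat) (K T : set 'rV[R]_n) (d : R)
  (Lam : set 'rV[R]_n) :
  compact K -> compact T -> T° !=set0 -> 0 < d ->
  finite_set Lam -> is_delta_net Lam d (mink_sum K T) ->
  (M_omega_net K (mink_sum T (dilate d (@ball2 R n))) Lam <= M_omega K T)%E.
Proof.
move=> _ _ _ _ _ net.
apply: ereal_sup_le => _ [m [x [w [LKx w_ge0 net_le1 ->]]]].
have Kx i : K (x i) by case: (LKx i).
exists m, x, w; split=> //.
move=> y; exact (overlap_le1_of_net net Kx w_ge0 net_le1 y).
Qed.
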